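(* Let $R$ be an abelian Rickart $*$-ring and $a,b\in R$. Then $a\perp b$ if and only if $RP(a)RP(b)=0$.
   Context: A Rickart $*$-ring is a $*$-ring in which the right annihilator of every element is generated by a projection ($e=e^2=e^*$); it has unity. For $a\in R$, $RP(a)$ is the unique projection $e$ with $ae=a$ and such that $ax=0\iff ex=0$; equivalently $\{x:ax=0\}=(1-RP(a))R$. Abelian: all idempotents central. Orthogonality: $a\perp b$ iff there is $x\in R$ with $xa=a=ax^*$ and $xb=0=bx^*$. *)

From HB Require Import structures.
From mathcomp Require Import all_boot all_order all_algebra.
Set Implicit Arguments. Unset Strict Implicit. Unset Printing Implicit Defensive.
Import GRing.Theory.
Local Open Scope ring_scope.

Definition is_star (R : pzRingType) (star : R -> R) : Prop :=
  [/\ forall x, star (star x) = x,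
      forall x y, star (x + y) = star x + star y &
      forall x y, star (x * y) = star y * star x].

Definition is_projection (R : pzRingType) (star : R -> R) (e : R) : Prop :=
  e * e = e /\ star e = e.

Definition rickart (R : pzRingType) (star : R -> R) : Prop :=
  forall a : R, exists e : R, is_projection star e /\
    (forall x : R, a * x = 0 <-> exists y : R, x = e * y).

Definition abelian_ring (R : pzRingType) : Prop :=
  forall e : R, e * e = e -> forall x : R, e * x = x * e.

Definition is_RP (R : pzRingType) (star : R -> R) (a e : R) : Prop :=
  [/\ is_projection star e, a * e = a & forall x : R, a * x = 0 <-> e * x = 0].

Definition orth (R : pzRingType) (star : R -> R) (a b : R) : Prop :=
  exists x : R, [/\ x * a = a, a = a * star x, x * b = 0 & b * star x = 0].

From mathcomp Require Import all_boot all_order all_algebra.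
Local Open Scope ring_scope.
Import GRing.Theory.

(* In an abelian ring the projection RP(b) is central, so anything b kills
   on the right is killed by RP(b) on either side.  If x witnesses a ⊥ b then
   b x^* = 0, hence a RP(b) = a x^* RP(b) = 0, i.e. RP(a) RP(b) = 0.
   Conversely, when RP(a) RP(b) = 0 the projection RP(a) itself witnesses
   a ⊥ b. *)

Section AbelianRightProjections.

Context {R : pzRingType} {star : R -> R}.
Hypothesis Habel : abelian_ring R.

Lemma RP_comm {a e : R} (x : R) : is_RP star a e -> e * x = x * e.
Proof. by case=> [[e2 _] _ _]; apply: Habel. Qed.

Lemma RP_mull {a e : R} : is_RP star a e -> e * a = a.
Proof. by move=> He; rewrite (RP_comm _ He); case: He. Qed.

Lemma RP_rann_mulr_eq0 {a e x : R} : is_RP star a e -> a * x = 0 -> x * e = 0.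
Proof.
move=> He ax0; rewrite -(RP_comm _ He).
by case: He => _ _ /(_ x) [/(_ ax0)].
Qed.

Lemma mul_RP_eq0 {b eb e : R} : is_RP star b eb -> e * eb = 0 -> e * b = 0.
Proof. by move=> Heb e0; rewrite -(RP_mull Heb) mulrA e0 mul0r. Qed.

Lemma orth_RP_mul_eq0 {a b ea eb : R} :
  is_RP star a ea -> is_RP star b eb -> orth star a b -> ea * eb = 0.
Proof.
move=> [_ _ Ha] Heb [x [_ ax _ bx]].
have xeb : star x * eb = 0 by exact: RP_rann_mulr_eq0 Heb bx.
by apply/Ha; rewrite ax -mulrA xeb mulr0.
Qed.

Lemma RP_orth {a b ea : R} : is_RP star a ea -> ea * b = 0 -> orth star a b.
Proof.
move=> Hea eab; exists ea; split=> //.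
- exact: RP_mull Hea.
- by case: Hea => [[_ ->] ->].
- by case: (Hea) => [[_ ->] _ _]; rewrite -(RP_comm _ Hea).
Qed.

End AbelianRightProjections.

Theorem mainTheorem13 (R : pzRingType) (star : R -> R)
  (Hstar : is_star star) (Hrick : rickart star) (Habel : abelian_ring R)
  (a b ea eb : R) (Hea : is_RP star a ea) (Heb : is_RP star b eb) :
  orth star a b <-> ea * eb = 0.
Proof.
split; first exact: (orth_RP_mul_eq0 Habel Hea Heb).
by move=> /(mul_RP_eq0 Habel Heb); apply: RP_orth.
Qed.
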